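(* Let $K\subseteq\mathbb{R}^n$ be non-empty and closed. If $s=(s_\alpha)_{\alpha\in\mathbb{N}_0^n}$ is a $K^\sharp$-moment sequence, then $D(s)$ is a $K$-positivity preserver.
   Context: $D(s):=\sum_\alpha\frac{s_\alpha}{\alpha!}\partial^\alpha$ on $\mathbb{R}[x_1,\dots,x_n]$. $T$ is a $K$-positivity preserver if it maps polynomials non-negative on $K$ to polynomials non-negative on $K$. $K^\sharp:=\{x\in\mathbb{R}^n: x+K\subseteq K\}$. For closed $L$, $s$ is an $L$-moment sequence if $s_\alpha=\int x^\alpha\,\mathrm{d}\mu$ for all $\alpha$ for some measure $\mu$ with $\mathrm{supp}\,\mu\subseteq L$. *)

From HB Require Import structures.
From mathcomp Require Import all_boot all_order all_algebra.
From mathcomp Require Import all_classical all_reals all_analysis.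
From mathcomp Require mpoly.
(* activate mpoly's canonical instances (they are export-local and we cannot
   Import mpoly next to mathcomp-analysis because of notation clashes) *)
Canonical mpoly.mpoly_MPoly__canonical__Algebra_Additive.
Canonical mpoly.mpoly_MPoly__canonical__GRing_Linear.
Canonical mpoly.mpoly_bmultinom__canonical__choice_Choice.
Canonical mpoly.mpoly_bmultinom__canonical__choice_Countable.
Canonical mpoly.mpoly_bmultinom__canonical__choice_SubChoice.
Canonical mpoly.mpoly_bmultinom__canonical__choice_SubCountable.
Canonical mpoly.mpoly_bmultinom__canonical__eqtype_Equality.
Canonical mpoly.mpoly_bmultinom__canonical__eqtype_SubEquality.
Canonical mpoly.mpoly_bmultinom__canonical__eqtype_SubType.
Canonical mpoly.mpoly_bmultinom__canonical__fintype_Finite.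
Canonical mpoly.mpoly_bmultinom__canonical__fintype_SubFinite.
Canonical mpoly.mpoly_comp_mpoly__canonical__Algebra_Additive.
Canonical mpoly.mpoly_comp_mpoly__canonical__GRing_LRMorphism.
Canonical mpoly.mpoly_comp_mpoly__canonical__GRing_Linear.
Canonical mpoly.mpoly_comp_mpoly__canonical__GRing_RMorphism.
Canonical mpoly.mpoly_dhomog__canonical__Algebra_AddMagma.
Canonical mpoly.mpoly_dhomog__canonical__Algebra_AddSemigroup.
Canonical mpoly.mpoly_dhomog__canonical__Algebra_AddUMagma.
Canonical mpoly.mpoly_dhomog__canonical__Algebra_BaseAddMagma.
Canonical mpoly.mpoly_dhomog__canonical__Algebra_BaseAddUMagma.
Canonical mpoly.mpoly_dhomog__canonical__Algebra_BaseZmodule.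
Canonical mpoly.mpoly_dhomog__canonical__Algebra_ChoiceBaseAddMagma.
Canonical mpoly.mpoly_dhomog__canonical__Algebra_ChoiceBaseAddUMagma.
Canonical mpoly.mpoly_dhomog__canonical__Algebra_Nmodule.
Canonical mpoly.mpoly_dhomog__canonical__Algebra_SubAddUMagma.
Canonical mpoly.mpoly_dhomog__canonical__Algebra_SubBaseAddUMagma.
Canonical mpoly.mpoly_dhomog__canonical__Algebra_SubNmodule.
Canonical mpoly.mpoly_dhomog__canonical__Algebra_SubZmodule.
Canonical mpoly.mpoly_dhomog__canonical__Algebra_Zmodule.
Canonical mpoly.mpoly_dhomog__canonical__GRing_LSemiModule.
Canonical mpoly.mpoly_dhomog__canonical__GRing_Lmodule.
Canonical mpoly.mpoly_dhomog__canonical__GRing_SubLSemiModule.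
Canonical mpoly.mpoly_dhomog__canonical__GRing_SubLmodule.
Canonical mpoly.mpoly_dhomog__canonical__choice_Choice.
Canonical mpoly.mpoly_dhomog__canonical__choice_SubChoice.
Canonical mpoly.mpoly_dhomog__canonical__eqtype_Equality.
Canonical mpoly.mpoly_dhomog__canonical__eqtype_SubEquality.
Canonical mpoly.mpoly_dhomog__canonical__eqtype_SubType.
Canonical mpoly.mpoly_dhomog__canonical__vector_SemiVector.
Canonical mpoly.mpoly_dhomog__canonical__vector_Vector.
Canonical mpoly.mpoly_inject__canonical__Algebra_Additive.
Canonical mpoly.mpoly_inject__canonical__GRing_RMorphism.
Canonical mpoly.mpoly_inject_cast__canonical__Algebra_Additive.
Canonical mpoly.mpoly_inject_cast__canonical__GRing_RMorphism.
Canonical mpoly.mpoly_ipoly__canonical__Algebra_AddMagma.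
Canonical mpoly.mpoly_ipoly__canonical__Algebra_AddSemigroup.
Canonical mpoly.mpoly_ipoly__canonical__Algebra_AddUMagma.
Canonical mpoly.mpoly_ipoly__canonical__Algebra_BaseAddMagma.
Canonical mpoly.mpoly_ipoly__canonical__Algebra_BaseAddUMagma.
Canonical mpoly.mpoly_ipoly__canonical__Algebra_BaseZmodule.
Canonical mpoly.mpoly_ipoly__canonical__Algebra_ChoiceBaseAddMagma.
Canonical mpoly.mpoly_ipoly__canonical__Algebra_ChoiceBaseAddUMagma.
Canonical mpoly.mpoly_ipoly__canonical__Algebra_Nmodule.
Canonical mpoly.mpoly_ipoly__canonical__Algebra_Zmodule.
Canonical mpoly.mpoly_ipoly__canonical__GRing_LSemiModule.
Canonical mpoly.mpoly_ipoly__canonical__GRing_Lmodule.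
Canonical mpoly.mpoly_ipoly__canonical__GRing_NzRing.
Canonical mpoly.mpoly_ipoly__canonical__GRing_NzSemiRing.
Canonical mpoly.mpoly_ipoly__canonical__GRing_PzRing.
Canonical mpoly.mpoly_ipoly__canonical__GRing_PzSemiRing.
Canonical mpoly.mpoly_ipoly__canonical__choice_Choice.
Canonical mpoly.mpoly_ipoly__canonical__eqtype_Equality.
Canonical mpoly.mpoly_ishomog1_pred__canonical__Algebra_AddClosed.
Canonical mpoly.mpoly_ishomog1_pred__canonical__Algebra_OppClosed.
Canonical mpoly.mpoly_ishomog1_pred__canonical__Algebra_ZmodClosed.
Canonical mpoly.mpoly_ishomog1_pred__canonical__GRing_SubmodClosed.
Canonical mpoly.mpoly_map_mpoly__canonical__Algebra_Additive.
Canonical mpoly.mpoly_map_mpoly__canonical__GRing_RMorphism.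
Canonical mpoly.mpoly_mcoeff__canonical__Algebra_Additive.
Canonical mpoly.mpoly_mcoeff__canonical__GRing_LRMorphism.
Canonical mpoly.mpoly_mcoeff__canonical__GRing_Linear.
Canonical mpoly.mpoly_mcoeff__canonical__GRing_RMorphism.
Canonical mpoly.mpoly_mdeg__canonical__mpoly_Measure.
Canonical mpoly.mpoly_mderiv__canonical__Algebra_Additive.
Canonical mpoly.mpoly_mderiv__canonical__GRing_Linear.
Canonical mpoly.mpoly_mderivm__canonical__Algebra_Additive.
Canonical mpoly.mpoly_mderivm__canonical__GRing_Linear.
Canonical mpoly.mpoly_meval__canonical__Algebra_Additive.
Canonical mpoly.mpoly_meval__canonical__GRing_LRMorphism.
Canonical mpoly.mpoly_meval__canonical__GRing_Linear.
Canonical mpoly.mpoly_meval__canonical__GRing_RMorphism.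
Canonical mpoly.mpoly_mmap__canonical__Algebra_Additive.
Canonical mpoly.mpoly_mmap__canonical__GRing_RMorphism.
Canonical mpoly.mpoly_mnm_add__canonical__Monoid_ComLaw.
Canonical mpoly.mpoly_mnm_add__canonical__Monoid_Law.
Canonical mpoly.mpoly_mnm_add__canonical__SemiGroup_ComLaw.
Canonical mpoly.mpoly_mnm_add__canonical__SemiGroup_Law.
Canonical mpoly.mpoly_mnmwgt__canonical__mpoly_Measure.
Canonical mpoly.mpoly_mpolyC__canonical__Algebra_Additive.
Canonical mpoly.mpoly_mpolyC__canonical__GRing_RMorphism.
Canonical mpoly.mpoly_mpolyOver_pred__canonical__Algebra_AddClosed.
Canonical mpoly.mpoly_mpolyOver_pred__canonical__Algebra_OppClosed.
Canonical mpoly.mpoly_mpolyOver_pred__canonical__Algebra_ZmodClosed.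
Canonical mpoly.mpoly_mpolyOver_pred__canonical__GRing_Mul2Closed.
Canonical mpoly.mpoly_mpolyOver_pred__canonical__GRing_MulClosed.
Canonical mpoly.mpoly_mpolyOver_pred__canonical__GRing_Semiring2Closed.
Canonical mpoly.mpoly_mpolyOver_pred__canonical__GRing_SemiringClosed.
Canonical mpoly.mpoly_mpolyOver_pred__canonical__GRing_SmulClosed.
Canonical mpoly.mpoly_mpolyOver_pred__canonical__GRing_SubringClosed.
Canonical mpoly.mpoly_mpoly__canonical__Algebra_AddMagma.
Canonical mpoly.mpoly_mpoly__canonical__Algebra_AddSemigroup.
Canonical mpoly.mpoly_mpoly__canonical__Algebra_AddUMagma.
Canonical mpoly.mpoly_mpoly__canonical__Algebra_BaseAddMagma.
Canonical mpoly.mpoly_mpoly__canonical__Algebra_BaseAddUMagma.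
Canonical mpoly.mpoly_mpoly__canonical__Algebra_BaseZmodule.
Canonical mpoly.mpoly_mpoly__canonical__Algebra_ChoiceBaseAddMagma.
Canonical mpoly.mpoly_mpoly__canonical__Algebra_ChoiceBaseAddUMagma.
Canonical mpoly.mpoly_mpoly__canonical__Algebra_Nmodule.
Canonical mpoly.mpoly_mpoly__canonical__Algebra_Zmodule.
Canonical mpoly.mpoly_mpoly__canonical__GRing_Algebra.
Canonical mpoly.mpoly_mpoly__canonical__GRing_ComAlgebra.
Canonical mpoly.mpoly_mpoly__canonical__GRing_ComNzRing.
Canonical mpoly.mpoly_mpoly__canonical__GRing_ComNzSemiRing.
Canonical mpoly.mpoly_mpoly__canonical__GRing_ComPzRing.
Canonical mpoly.mpoly_mpoly__canonical__GRing_ComPzSemiRing.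
Canonical mpoly.mpoly_mpoly__canonical__GRing_ComSemiAlgebra.
Canonical mpoly.mpoly_mpoly__canonical__GRing_ComUnitAlgebra.
Canonical mpoly.mpoly_mpoly__canonical__GRing_ComUnitRing.
Canonical mpoly.mpoly_mpoly__canonical__GRing_IntegralDomain.
Canonical mpoly.mpoly_mpoly__canonical__GRing_LSemiAlgebra.
Canonical mpoly.mpoly_mpoly__canonical__GRing_LSemiModule.
Canonical mpoly.mpoly_mpoly__canonical__GRing_Lalgebra.
Canonical mpoly.mpoly_mpoly__canonical__GRing_Lmodule.
Canonical mpoly.mpoly_mpoly__canonical__GRing_NzRing.
Canonical mpoly.mpoly_mpoly__canonical__GRing_NzSemiRing.
Canonical mpoly.mpoly_mpoly__canonical__GRing_PzRing.
Canonical mpoly.mpoly_mpoly__canonical__GRing_PzSemiRing.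
Canonical mpoly.mpoly_mpoly__canonical__GRing_SemiAlgebra.
Canonical mpoly.mpoly_mpoly__canonical__GRing_UnitAlgebra.
Canonical mpoly.mpoly_mpoly__canonical__GRing_UnitRing.
Canonical mpoly.mpoly_mpoly__canonical__choice_Choice.
Canonical mpoly.mpoly_mpoly__canonical__choice_SubChoice.
Canonical mpoly.mpoly_mpoly__canonical__eqtype_Equality.
Canonical mpoly.mpoly_mpoly__canonical__eqtype_SubEquality.
Canonical mpoly.mpoly_mpoly__canonical__eqtype_SubType.
Canonical mpoly.mpoly_mpoly_of_dhomog__canonical__Algebra_Additive.
Canonical mpoly.mpoly_mpoly_of_dhomog__canonical__GRing_Linear.
Canonical mpoly.mpoly_mpwiden__canonical__Algebra_Additive.
Canonical mpoly.mpoly_mpwiden__canonical__GRing_RMorphism.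
Canonical mpoly.mpoly_msym__canonical__Algebra_Additive.
Canonical mpoly.mpoly_msym__canonical__GRing_LRMorphism.
Canonical mpoly.mpoly_msym__canonical__GRing_Linear.
Canonical mpoly.mpoly_msym__canonical__GRing_RMorphism.
Canonical mpoly.mpoly_multinom__canonical__Order_BDistrLattice.
Canonical mpoly.mpoly_multinom__canonical__Order_BJoinSemilattice.
Canonical mpoly.mpoly_multinom__canonical__Order_BLattice.
Canonical mpoly.mpoly_multinom__canonical__Order_BMeetSemilattice.
Canonical mpoly.mpoly_multinom__canonical__Order_BPOrder.
Canonical mpoly.mpoly_multinom__canonical__Order_BPreorder.
Canonical mpoly.mpoly_multinom__canonical__Order_BTotal.
Canonical mpoly.mpoly_multinom__canonical__Order_DistrLattice.
Canonical mpoly.mpoly_multinom__canonical__Order_JoinSemilattice.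
Canonical mpoly.mpoly_multinom__canonical__Order_Lattice.
Canonical mpoly.mpoly_multinom__canonical__Order_MeetSemilattice.
Canonical mpoly.mpoly_multinom__canonical__Order_POrder.
Canonical mpoly.mpoly_multinom__canonical__Order_Preorder.
Canonical mpoly.mpoly_multinom__canonical__Order_Total.
Canonical mpoly.mpoly_multinom__canonical__choice_Choice.
Canonical mpoly.mpoly_multinom__canonical__choice_Countable.
Canonical mpoly.mpoly_multinom__canonical__choice_SubChoice.
Canonical mpoly.mpoly_multinom__canonical__choice_SubCountable.
Canonical mpoly.mpoly_multinom__canonical__eqtype_Equality.
Canonical mpoly.mpoly_multinom__canonical__eqtype_SubEquality.
Canonical mpoly.mpoly_multinom__canonical__eqtype_SubType.
Canonical mpoly.mpoly_muni__canonical__Algebra_Additive.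
Canonical mpoly.mpoly_muni__canonical__GRing_RMorphism.
Canonical mpoly.mpoly_mwiden__canonical__Algebra_Additive.
Canonical mpoly.mpoly_mwiden__canonical__GRing_RMorphism.
Canonical mpoly.mpoly_pihomog__canonical__Algebra_Additive.
Canonical mpoly.mpoly_pihomog__canonical__GRing_Linear.
Canonical mpoly.mpoly_symmetric_pred__canonical__Algebra_AddClosed.
Canonical mpoly.mpoly_symmetric_pred__canonical__Algebra_OppClosed.
Canonical mpoly.mpoly_symmetric_pred__canonical__Algebra_ZmodClosed.
Canonical mpoly.mpoly_symmetric_pred__canonical__GRing_DivClosed.
Canonical mpoly.mpoly_symmetric_pred__canonical__GRing_DivalgClosed.
Canonical mpoly.mpoly_symmetric_pred__canonical__GRing_DivringClosed.
Canonical mpoly.mpoly_symmetric_pred__canonical__GRing_Mul2Closed.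
Canonical mpoly.mpoly_symmetric_pred__canonical__GRing_MulClosed.
Canonical mpoly.mpoly_symmetric_pred__canonical__GRing_SdivClosed.
Canonical mpoly.mpoly_symmetric_pred__canonical__GRing_Semiring2Closed.
Canonical mpoly.mpoly_symmetric_pred__canonical__GRing_SemiringClosed.
Canonical mpoly.mpoly_symmetric_pred__canonical__GRing_SmulClosed.
Canonical mpoly.mpoly_symmetric_pred__canonical__GRing_SubalgClosed.
Canonical mpoly.mpoly_symmetric_pred__canonical__GRing_SubmodClosed.
Canonical mpoly.mpoly_symmetric_pred__canonical__GRing_SubringClosed.

Set Implicit Arguments. Unset Strict Implicit. Unset Printing Implicit Defensive.
Import Order.TTheory GRing.Theory Num.Theory.
Import numFieldNormedType.Exports.
Local Open Scope classical_set_scope.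
Local Open Scope ring_scope.

(* R^n is 'rV[R]_n with its (product / sup-norm) topology. *)
Notation Rn R n := 'rV[R]_n.

Definition BorelRn (R : realType) (n : nat) :=
  g_sigma_algebraType (@open (Rn R n)).

Definition coords (R : realType) (n : nat) (x : Rn R n) : 'I_n -> R :=
  fun i => x ord0 i.

Definition monom (R : realType) (n : nat) (alpha : mpoly.multinom n)
    (x : Rn R n) : R :=
  \prod_(i < n) (x ord0 i) ^+ (mpoly.fun_of_multinom alpha i).

Definition mfact (n : nat) (alpha : mpoly.multinom n) : nat :=
  (\prod_(i < n) (mpoly.fun_of_multinom alpha i)`!)%N.

(* D(s) p = sum_alpha s_alpha / alpha! * d^alpha p.  For a given p only the
   alpha with |alpha| < msize p (i.e. |alpha| <= deg p) can give a non-zero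
   derivative, so the (formally infinite) sum is the finite sum below. *)
Definition Dop (R : realType) (n : nat) (s : mpoly.multinom n -> R)
    (p : mpoly.mpoly n R) : mpoly.mpoly n R :=
  \sum_(a : mpoly.bmultinom n ((\max_(m <- mpoly.msupp p) (mpoly.mdeg m).+1)%N))
     (s (mpoly.bmnm a) / (mfact (mpoly.bmnm a))%:R) *: mpoly.mderivm (mpoly.bmnm a) p.

Definition pos_preserver (R : realType) (n : nat) (K : set (Rn R n))
    (T : mpoly.mpoly n R -> mpoly.mpoly n R) : Prop :=
  forall p : mpoly.mpoly n R,
    (forall x, K x -> 0 <= mpoly.meval (coords x) p) ->
    forall x, K x -> 0 <= mpoly.meval (coords x) (T p).

Definition Ksharp (R : realType) (n : nat) (K : set (Rn R n)) : set (Rn R n) :=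
  [set x | forall y, K y -> K (x + y)].

Definition msupport (R : realType) (n : nat)
    (mu : {measure set (BorelRn R n) -> \bar R}) : set (Rn R n) :=
  [set x | forall U : set (Rn R n), open U -> U x -> (0 < mu U)%E].

Definition moment_seq (R : realType) (n : nat) (L : set (Rn R n))
    (s : mpoly.multinom n -> R) : Prop :=
  exists mu : {measure set (BorelRn R n) -> \bar R},
    msupport mu `<=` L /\
    forall alpha : mpoly.multinom n,
      mu.-integrable setT (fun x : BorelRn R n => (monom alpha x)%:E) /\
      (s alpha)%:E = (\int[mu]_(x in setT) (monom alpha x)%:E)%E.

From HB Require Import structures.
From mathcomp Require Import all_boot all_order all_algebra.
From mathcomp Require Import all_classical all_reals all_analysis.
From mathcomp Require mpoly.
From mathcomp Require Import ring lra.
Set Implicit Arguments. Unset Strict Implicit. Unset Printing Implicit Defensive.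
Import Order.TTheory GRing.Theory Num.Theory.
Import numFieldNormedType.Exports.
Local Open Scope classical_set_scope.
Local Open Scope ring_scope.

(* If mu represents s, Taylor's formula gives
     D(s)p(x) = sum_a s_a d^a p(x) / a! = int sum_a y^a d^a p(x) / a! dmu(y)
              = int p(x + y) dmu(y).
   Since R^n is second countable, the complement of supp mu is covered by
   countably many mu-null rational balls, so mu-almost every y lies in
   supp mu, which is contained in K^#.  For x in K this gives x + y in K,
   hence p(x + y) >= 0 almost everywhere and the integral is non-negative. *)

Section BoundedMultinomials.
Variables (n d : nat).

Lemma bmnm_insubd (a0 : mpoly.bmultinom n d) (m : mpoly.multinom n) :
  (mpoly.mdeg m < d)%N -> mpoly.bmnm (insubd a0 m) = m.
Proof. by move=> m_lt; apply: (insubdK a0); rewrite unfold_in. Qed.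

Lemma mnm_le_mdeg (m : mpoly.multinom n) (i : 'I_n) :
  (mpoly.fun_of_multinom m i <= mpoly.mdeg m)%N.
Proof. by rewrite mpoly.mdegE (bigD1 i) //= leq_addr. Qed.

Lemma bmnm_lt (a : mpoly.bmultinom n d) (i : 'I_n) :
  (mpoly.fun_of_multinom (mpoly.bmnm a) i < d)%N.
Proof. exact: leq_ltn_trans (mnm_le_mdeg _ i) (valP a). Qed.

Lemma prod_sum_bmultinom (R : comPzSemiRingType) (m : mpoly.multinom n)
    (G : 'I_n -> nat -> R) :
  (mpoly.mdeg m < d)%N ->
  (forall i k, (mpoly.fun_of_multinom m i < k)%N -> G i k = 0) ->
  \prod_(i < n) \sum_(k < d) G i k =
  \sum_(a : mpoly.bmultinom n d)
     \prod_(i < n) G i (mpoly.fun_of_multinom (mpoly.bmnm a) i).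
Proof.
move=> m_lt G0.
(* Only exponents bounded by m contribute on either side, and there bounded
   multinomials and finite functions into 'I_d are in bijection. *)
have prodG0 (F : 'I_n -> nat) :
    ~~ [forall i, F i <= mpoly.fun_of_multinom m i]%N ->
    \prod_(i < n) G i (F i) = 0.
  by case/forallPn=> i; rewrite -ltnNge => lt_i; rewrite (bigD1 i) //= G0 ?mul0r.
pose below (F : 'I_n -> nat) := [forall i, F i <= mpoly.fun_of_multinom m i]%N.
rewrite bigA_distr_bigA /=.
rewrite (bigID (fun f : {ffun 'I_n -> 'I_d} => below (fun i => f i))) /=.
rewrite [X in _ + X]big1 ?addr0; last by move=> f; apply: prodG0.
rewrite [RHS](bigID (fun a => below (mpoly.fun_of_multinom (mpoly.bmnm a)))) /=.
rewrite [X in _ + X]big1 ?addr0; last by move=> a; apply: prodG0.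
pose a0 := @mpoly.BMultinom n d m m_lt.
pose tuple_of (f : {ffun 'I_n -> 'I_d}) :=
  mpoly.Multinom [tuple (f i : nat) | i < n].
have tuple_ofE f i : mpoly.fun_of_multinom (tuple_of f) i = f i.
  by rewrite mpoly.mnmE.
have below_lt (f : {ffun 'I_n -> 'I_d}) :
    below (fun i => f i) -> (mpoly.mdeg (tuple_of f) < d)%N.
  move=> /forallP f_le; apply: (leq_ltn_trans _ m_lt).
  by rewrite !mpoly.mdegE; apply: leq_sum => i _; rewrite tuple_ofE f_le.
pose ffun_of (a : mpoly.bmultinom n d) : {ffun 'I_n -> 'I_d} :=
  [ffun i => Ordinal (bmnm_lt a i)].
rewrite (reindex_onto ffun_of (fun f => insubd a0 (tuple_of f))); last first.
  move=> f /below_lt f_lt; apply/ffunP => i; apply: val_inj.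
  by rewrite ffunE /= bmnm_insubd // tuple_ofE.
have below_ffun_of a :
    below (fun i => ffun_of a i) = below (mpoly.fun_of_multinom (mpoly.bmnm a)).
  by apply: eq_forallb => i; rewrite ffunE.
apply: eq_big => [a|a _]; last by apply: eq_bigr => i _; rewrite ffunE.
rewrite below_ffun_of; case: (boolP (below _)) => //= _.
apply/eqP/val_inj; rewrite /= bmnm_insubd; last first.
  apply: leq_ltn_trans (valP a).
  by rewrite !mpoly.mdegE; apply: leq_sum => i _; rewrite tuple_ofE ffunE.
by apply/mpoly.mnmP => i; rewrite tuple_ofE ffunE.
Qed.

End BoundedMultinomials.

Section Taylor.
Variables (R : numFieldType) (n d : nat).
Implicit Types (x y : 'I_n -> R) (m : mpoly.multinom n) (p : mpoly.mpoly n R).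

Lemma meval_shift_mpolyX m x y : (mpoly.mdeg m < d)%N ->
  mpoly.meval (fun i => x i + y i) (mpoly.mpolyX R m) =
  \sum_(a : mpoly.bmultinom n d)
    (\prod_(i < n) y i ^+ mpoly.fun_of_multinom (mpoly.bmnm a) i)
      / (mfact (mpoly.bmnm a))%:R *
    mpoly.meval x (mpoly.mderivm (mpoly.bmnm a) (mpoly.mpolyX R m)).
Proof.
move=> m_lt; rewrite mpoly.mevalX.
pose G i k := ('C(mpoly.fun_of_multinom m i, k))%:R *
  (x i ^+ (mpoly.fun_of_multinom m i - k) * y i ^+ k) : R.
transitivity (\prod_(i < n) \sum_(k < d) G i k).
  apply: eq_bigr => i _; set mi := mpoly.fun_of_multinom m i.
  have mi_lt : (mi < d)%N := leq_ltn_trans (mnm_le_mdeg m i) m_lt.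
  rewrite exprDn (big_ord_widen _ (fun k => x i ^+ (mi - k) * y i ^+ k *+ 'C(mi, k)) mi_lt).
  rewrite big_mkcond /=; apply: eq_bigr => k _; rewrite /G.
  case: ifP => [_|/negbT]; first by rewrite mulr_natl.
  by rewrite ltnS -ltnNge => /bin_small ->; rewrite mul0r.
rewrite (prod_sum_bmultinom m_lt); last by move=> i k /bin_small hk; rewrite /G hk mul0r.
apply: eq_bigr => a _.
rewrite mpoly.mderivmX mpoly.mevalZ mpoly.mevalX /mfact natr_prod -prodfV natr_prod.
rewrite -!big_split /=; apply: eq_bigr => i _.
rewrite mpoly.mnmBE /G -bin_ffact natrM.
have fact_neq0 : (mpoly.fun_of_multinom (mpoly.bmnm a) i)`!%:R != 0 :> R.
  by rewrite pnatr_eq0 -lt0n fact_gt0.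
by field.
Qed.

Lemma meval_shift p x y :
  (forall m, m \in mpoly.msupp p -> (mpoly.mdeg m < d)%N) ->
  mpoly.meval (fun i => x i + y i) p =
  \sum_(a : mpoly.bmultinom n d)
    (\prod_(i < n) y i ^+ mpoly.fun_of_multinom (mpoly.bmnm a) i)
      / (mfact (mpoly.bmnm a))%:R *
    mpoly.meval x (mpoly.mderivm (mpoly.bmnm a) p).
Proof.
move=> p_lt.
rewrite [in LHS](mpoly.mpolyE p) raddf_sum /=.
under [RHS]eq_bigr => a _ do
  rewrite [in mpoly.mderivm _ p](mpoly.mpolyE p) !raddf_sum /= mulr_sumr.
rewrite exchange_big /= big_seq [RHS]big_seq; apply: eq_bigr => m m_supp.
rewrite mpoly.mevalZ meval_shift_mpolyX ?p_lt // mulr_sumr.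
by apply: eq_bigr => a _; rewrite mpoly.mderivmZ mpoly.mevalZ mulrCA.
Qed.

End Taylor.

Section RationalBalls.
Variables (R : realType) (n : nat).

Definition rat_ball (qr : 'rV[rat]_n * rat) : set 'rV[R]_n :=
  ball (map_mx (@ratr R) qr.1 : 'rV[R]_n) (ratr qr.2 : R).

Lemma open_rat_ball_subset (U : set 'rV[R]_n) (y : 'rV[R]_n) :
  open U -> U y -> exists qr, rat_ball qr y /\ rat_ball qr `<=` U.
Proof.
move=> oU Uy; have /nbhs_ballP[e /= e_gt0 yeU] : nbhs y U by exact: open_nbhs_nbhs.
have [r /andP[r_gt0 r_lt]] : exists r : rat, (0 < ratr r :> R) && (ratr r < e / 2).
  have [r] := @rat_in_itvoo R 0 (e / 2) (divr_gt0 e_gt0 (ltr0Sn _ 1)).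
  by rewrite in_itv /=; exists r.
have /choice[f f_near] : forall j : 'I_n, exists q : rat,
    ratr q \in `](y ord0 j - ratr r), (y ord0 j + ratr r)[.
  by move=> j; apply: rat_in_itvoo; lra.
pose q : 'rV[rat]_n := \row_j f j.
have yq : `|y - map_mx (@ratr R) q| < ratr r.
  suff : ball y (ratr r) (map_mx (@ratr R) q) by rewrite -ball_normE.
  split=> // i j; rewrite ord1 -ball_normE /= !mxE.
  move: (f_near j); rewrite in_itv /= => /andP[lo hi].
  by rewrite ltr_norml; apply/andP; split; lra.
exists (q, r); split; first by rewrite /rat_ball -ball_normE /= distrC.
move=> z; rewrite /rat_ball -ball_normE /= => qz; apply: yeU.
rewrite -ball_normE /=; apply: le_lt_trans (ler_distD (map_mx (@ratr R) q) y z) _.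
by have := ltrD yq qz; lra.
Qed.

End RationalBalls.

Section MeasureSupport.
Variables (R : realType) (n : nat) (mu : {measure set (BorelRn R n) -> \bar R}).

Lemma open_measurable_Rn (U : set 'rV[R]_n) : open U -> measurable (U : set (BorelRn R n)).
Proof. exact: sub_sigma_algebra. Qed.

Lemma msupportCP (y : 'rV[R]_n) :
  ~ msupport mu y <-> exists2 U, open U & U y /\ mu U = 0%E.
Proof.
split=> [/existsNP[U /not_implyP[oU /not_implyP[Uy]]]|[U oU [Uy muU0]] supp_y].
  by rewrite lt0e measure_ge0 andbT => /negP; rewrite negbK => /eqP muU0; exists U.
by have := supp_y U oU Uy; rewrite muU0 ltxx.
Qed.

Lemma open_msupportC : open (~` msupport mu).
Proof.
rewrite openE => y /msupportCP[U oU [Uy muU0]].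
apply: filterS (open_nbhs_nbhs (conj oU Uy)) => z Uz.
by apply/msupportCP; exists U.
Qed.

Lemma msupportC_null : mu (~` msupport mu) = 0%E.
Proof.
pose null_ball k := if unpickle k is Some qr then
    if `[< mu (rat_ball (R := R) qr) = 0%E >] then rat_ball (R := R) qr else set0
  else set0.
have null_ball_measurable k : measurable (null_ball k : set (BorelRn R n)).
  rewrite /null_ball; case: (unpickle k) => [qr|]; last exact: measurable0.
  by case: ifP => _; [apply: open_measurable_Rn; exact: ball_open|exact: measurable0].
have null_ball0 k : mu (null_ball k) = 0%E.
  rewrite /null_ball; case: (unpickle k) => [qr|]; last exact: measure0.
  by case: ifPn => [/asboolP //|_]; exact: measure0.
have cover : ~` msupport mu `<=` \bigcup_k null_ball k.
  move=> y /msupportCP[U oU [Uy muU0]].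
  have [qr [qr_y qrU]] := open_rat_ball_subset oU Uy.
  have mu_qr0 : mu (rat_ball (R := R) qr) = 0%E.
    apply/eqP; rewrite eq_le measure_ge0 andbT -muU0; apply: le_measure => //.
      by rewrite inE; apply: open_measurable_Rn; exact: ball_open.
    by rewrite inE; exact: open_measurable_Rn.
  by exists (pickle qr) => //; rewrite /null_ball pickleK asboolT.
apply/eqP; rewrite eq_le measure_ge0 andbT.
apply: le_trans (measure_sigma_subadditive _ null_ball_measurable
  (open_measurable_Rn open_msupportC) cover) _.
by rewrite eseries0.
Qed.

End MeasureSupport.

Definition mdeg_bound (R : ringType) (n : nat) (p : mpoly.mpoly n R) : nat :=
  (\max_(m <- mpoly.msupp p) (mpoly.mdeg m).+1)%N.

Lemma mdeg_lt_bound (R : ringType) (n : nat) (p : mpoly.mpoly n R) m :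
  m \in mpoly.msupp p -> (mpoly.mdeg m < mdeg_bound p)%N.
Proof. by move=> m_supp; apply: (@leq_bigmax_seq _ _ xpredT (fun m => (mpoly.mdeg m).+1)). Qed.

Section MomentIntegral.
Variables (R : realType) (n : nat) (mu : {measure set (BorelRn R n) -> \bar R}).
Variable s : mpoly.multinom n -> R.
Hypothesis monom_integrable :
  forall a, mu.-integrable setT (fun y : BorelRn R n => (monom a y)%:E).
Hypothesis s_moment :
  forall a, (s a)%:E = (\int[mu]_(y in setT) (monom a y)%:E)%E.
Variables (p : mpoly.mpoly n R) (x : 'rV[R]_n).

Definition taylor_coef (a : mpoly.multinom n) : R :=
  mpoly.meval (coords x) (mpoly.mderivm a p) / (mfact a)%:R.

Lemma meval_shift_monom (y : 'rV[R]_n) :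
  mpoly.meval (coords (y + x)) p =
  \sum_(a : mpoly.bmultinom n (mdeg_bound p))
    taylor_coef (mpoly.bmnm a) * monom (mpoly.bmnm a) y.
Proof.
rewrite (@mpoly.meval_eq _ _ _ (fun i => coords x i + coords y i)); last first.
  by move=> i; rewrite /coords mxE addrC.
rewrite (meval_shift _ _ (@mdeg_lt_bound _ _ p)).
by apply: eq_bigr => a _; rewrite /taylor_coef /monom mulrC mulrAC mulrA.
Qed.

Lemma meval_Dop :
  mpoly.meval (coords x) (Dop s p) =
  \sum_(a : mpoly.bmultinom n (mdeg_bound p))
    s (mpoly.bmnm a) * taylor_coef (mpoly.bmnm a).
Proof.
rewrite /Dop -/(mdeg_bound p) raddf_sum; apply: eq_bigr => a _.
by rewrite -[LHS]/(mpoly.meval _ _) mpoly.mevalZ /taylor_coef mulrAC -mulrA.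
Qed.

Lemma integrable_meval_shift :
  mu.-integrable setT (fun y : BorelRn R n => (mpoly.meval (coords (y + x)) p)%:E).
Proof.
under eq_fun do rewrite meval_shift_monom -sumEFin.
apply: (integrable_sum measurableT) => a _.
under eq_fun do rewrite EFinM.
exact: integrableZl.
Qed.

Lemma meval_Dop_integral :
  (mpoly.meval (coords x) (Dop s p))%:E =
  (\int[mu]_(y in setT) (mpoly.meval (coords (y + x)) p)%:E)%E.
Proof.
under [RHS]eq_integral do rewrite meval_shift_monom -sumEFin.
rewrite integral_sum //; last first.
  by move=> a; under eq_fun do rewrite EFinM; exact: integrableZl.
rewrite meval_Dop -sumEFin; apply: eq_bigr => a _.
under eq_integral do rewrite EFinM.
by rewrite integralZl // -s_moment -EFinM mulrC.
Qed.

End MomentIntegral.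

Theorem lemma4p10 (R : realType) (n : nat) (K : set 'rV[R]_n)
    (s : mpoly.multinom n -> R) :
  K !=set0 -> closed K ->
  moment_seq (Ksharp K) s ->
  pos_preserver K (Dop s).
Proof.
move=> _ _ [mu [supp_sharp moments]] p p_ge0 x Kx.
have monom_int a := (moments a).1; have s_mom a := (moments a).2.
rewrite -lee_fin (meval_Dop_integral monom_int s_mom).
rewrite (negligible_integral (open_measurable_Rn (@open_msupportC R n mu)) measurableT
  (integrable_meval_shift monom_int p x) (@msupportC_null R n mu)) setTD setCK.
apply: integral_ge0 => y supp_y; rewrite lee_fin.
exact/p_ge0/supp_sharp.
Qed.
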